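(* Let $n,k\ge1$, let $D=\{x\in\{0,\ldots,k-1\}^n:(\sum_i x_i)\bmod k=0\}$ and for $x\in D$ let $F(x)=\frac1k\big[(\sum_{i=1}^n x_i)\bmod 2k\big]\in\{0,1\}$. In the model where the $n$ parties share prior entanglement and communicate by classical broadcast, the communication complexity of computing $F(x)$ (on inputs $x\in D$, party $i$ holding $x_i$) is $O(n)$.
   Context: In the model with prior entanglement, the parties share an arbitrary entangled quantum state (e.g. the $n$-qubit state $(|0^n\rangle+|1^n\rangle)/\sqrt2$, one qubit per party), may perform local measurements depending on their inputs, and then broadcast classical bits; the communication complexity is the number of classical bits broadcast needed so that the parties can determine $F(x)$. *)

From HB Require Import structures.
From mathcomp Require Import all_boot all_order all_algebra.
From mathcomp Require Import complex.
From mathcomp Require Import reals.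
Set Implicit Arguments. Unset Strict Implicit. Unset Printing Implicit Defensive.
Import Order.TTheory GRing.Theory Num.Theory.
Local Open Scope ring_scope.

(* Party i (i : 'I_n) holds a local system C^d;
   the joint Hilbert space is C^(d^n), basis indexed by {ffun 'I_n -> 'I_d}. *)

Section Model.
Variables (C : numClosedFieldType) (n k d : nat).

Definition state := {ffun 'I_n -> 'I_d} -> C.

Definition apply_local (i : 'I_n) (M : 'M[C]_d) (psi : state) : state :=
  fun y => \sum_(a < d) M (y i) a * psi [ffun j => if j == i then a else y j].

Definition is_projector (P : 'M[C]_d) : Prop :=
  P *m P = P /\ forall a b, P b a = (P a b)^*.

(* At a node, party i performs the
   two-outcome projective measurement {P (x_i), 1 - P (x_i)} on its own share,
   where the projector depends on its input x_i and (through the position in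
   the tree) on the transcript so far; it broadcasts the outcome bit
   (true for P, false for 1 - P). *)
Inductive proto : Type :=
| Leaf of bool
| Node of 'I_n & ('I_k -> 'M[C]_d) & proto & proto.

Fixpoint valid (t : proto) : Prop :=
  match t with
  | Leaf _ => True
  | Node _ P t0 t1 => (forall a, is_projector (P a)) /\ valid t0 /\ valid t1
  end.

(* communication cost = number of broadcast bits in the worst case *)
Fixpoint depth (t : proto) : nat :=
  match t with
  | Leaf _ => 0
  | Node _ _ t0 t1 => (maxn (depth t0) (depth t1)).+1
  end.

(* Exact (zero-error) correctness: every transcript occurring with nonzero
   probability (i.e. nonzero unnormalized post-measurement state) ends in a leaf
   labelled by the correct value. *)
Fixpoint correct (t : proto) (psi : state) (x : {ffun 'I_n -> 'I_k}) (v : bool)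
  : Prop :=
  match t with
  | Leaf b => (exists y, psi y != 0) -> b = v
  | Node i P t0 t1 =>
      correct t0 (apply_local i (1%:M - P (x i)) psi) x v /\
      correct t1 (apply_local i (P (x i)) psi) x v
  end.

End Model.

Definition inD (n k : nat) (x : {ffun 'I_n -> 'I_k}) : bool :=
  ((\sum_(i < n) (x i : nat)) %% k == 0)%N.

Definition Fval (n k : nat) (x : {ffun 'I_n -> 'I_k}) : bool :=
  (((\sum_(i < n) (x i : nat)) %% (2 * k)) %/ k == 1)%N.

From HB Require Import structures.
From mathcomp Require Import all_boot all_order all_algebra.
From mathcomp Require Import complex.
From mathcomp Require Import reals.
From mathcomp Require Import ring.
From Stdlib Require Import FunctionalExtensionality.
Set Implicit Arguments. Unset Strict Implicit. Unset Printing Implicit Defensive.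
Import Order.TTheory GRing.Theory Num.Theory.
Local Open Scope ring_scope.

(* The parties share the GHZ state |0...0> + |1...1>.  On input a, a party
   measures the projector onto |0> + w^a |1>, where w is a k-th root of -1, and
   broadcasts the outcome.  Each party multiplies the ratio between the
   |0...0> and |1...1> branches by w^a (outcome P) or by -w^a (outcome 1 - P).
   After everybody has measured, that ratio is (-1)^f w^(sum x) =
   (-1)^(f + sum x / k), f being the number of outcomes 1 - P, and the two
   branches cancel unless it equals 1.  Hence on every transcript that occurs,
   the parity of f is F(x), so n broadcast bits suffice. *)

Section GHZ.
Variables (C : numClosedFieldType) (n d : nat).

Definition ghz : state C n d :=
  fun y => \sum_(z < d) \prod_(i < n) (y i == z)%:R.

(* The parties outside [s] have applied [Q]; those in [s] have not acted yet. *)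
Definition ghz_partial (s : seq 'I_n) (Q : 'I_n -> 'M[C]_d) : state C n d :=
  fun y => \sum_(z < d) \prod_(i < n)
    (if i \in s then (y i == z)%:R else Q i (y i) z).

Lemma ghz_partial_enum Q : ghz_partial (enum 'I_n) Q = ghz.
Proof.
apply: functional_extensionality => y; apply: eq_bigr => z _.
by apply: eq_bigr => i _; rewrite mem_enum.
Qed.

Lemma ghz_const (z0 : 'I_d) : (0 < n)%N -> ghz [ffun => z0] = 1.
Proof.
move=> n_gt0; rewrite /ghz (bigD1 z0) //= [X in _ + X]big1 ?addr0 => [|z z0z].
  by apply: big1 => i _; rewrite ffunE eqxx.
case: n n_gt0 => // n' _; rewrite big_ord_recl ffunE eq_sym (negbTE z0z).
by rewrite mul0r.
Qed.

Lemma ghz_partial_eq s Q Q' : (forall i, i \notin s -> Q i = Q' i) ->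
  ghz_partial s Q = ghz_partial s Q'.
Proof.
move=> eqQ; apply: functional_extensionality => y; apply: eq_bigr => z _.
by apply: eq_bigr => i _; case: ifPn => // /eqQ ->.
Qed.

Lemma apply_local_ghz_partial i s Q : i \notin s ->
  apply_local i (Q i) (ghz_partial (i :: s) Q) = ghz_partial s Q.
Proof.
move=> i_s; apply: functional_extensionality => y; rewrite /apply_local.
under eq_bigr => a _ do rewrite mulr_sumr.
rewrite exchange_big /=; apply: eq_bigr => z _.
rewrite [RHS](bigD1 i) //= (negbTE i_s).
under eq_bigr => a _ do rewrite (bigD1 i) //= mem_head ffunE eqxx.
rewrite (bigD1 z) //= eqxx mul1r [X in _ + X]big1 ?addr0 => [|a /negbTE->].
  2: by rewrite mul0r mulr0.
congr (_ * _); apply: eq_bigr => l /negbTE l_i.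
by rewrite ffunE l_i in_cons l_i.
Qed.

End GHZ.

Lemma ghz_measured_qubits (C : numClosedFieldType) (n : nat)
    (Q : 'I_n -> 'M[C]_2) (u : 'I_n -> C) y :
    (forall i r, Q i r ord0 = u i * Q i r ord_max) ->
  ghz_partial [::] Q y = (\prod_i u i + 1) * \prod_i Q i (y i) ord_max.
Proof.
move=> Qcol; rewrite /ghz_partial big_ord_recl big_ord_recl big_ord0 addr0 /=.
under eq_bigr => i _ do rewrite Qcol.
rewrite big_split /= mulrDl mul1r; congr (_ * _ + _).
by apply: eq_bigr => i _; congr (Q i (y i) _); apply: val_inj.
Qed.

Section RankOneProjector.
Variables (C : numClosedFieldType) (d : nat).

Definition rank1_proj (v : 'I_d -> C) : 'M[C]_d :=
  \matrix_(a, b) (v a * (v b)^* / \sum_c `|v c| ^+ 2).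

Lemma rank1_proj_projector v : \sum_c `|v c| ^+ 2 != 0 ->
  is_projector (rank1_proj v).
Proof.
set r := \sum_c _ => r_neq0; split.
  apply/matrixP => a b; rewrite mxE.
  have -> : \sum_c rank1_proj v a c * rank1_proj v c b
            = v a * (v b)^* / r / r * \sum_c `|v c| ^+ 2.
    by rewrite mulr_sumr; apply: eq_bigr => c _; rewrite !mxE normCK; ring.
  by rewrite mxE -/r mulfVK.
have r_real : r^* = r by apply/geC0_conj/sumr_ge0 => c _; rewrite exprn_ge0.
move=> a b; rewrite !mxE -/r rmorphM /= rmorphM /= fmorphV /=.
by rewrite conjCK r_real [v b * _]mulrC.
Qed.

End RankOneProjector.

Section ParityTree.
Variables (C : numClosedFieldType) (n k d : nat) (P : 'I_k -> 'M[C]_d).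

Fixpoint parity_tree (s : seq 'I_n) (p : bool) : proto C n k d :=
  match s with
  | [::] => Leaf C n k d p
  | i :: s' => Node i P (parity_tree s' (~~ p)) (parity_tree s' p)
  end.

Lemma depth_parity_tree s p : depth (parity_tree s p) = size s.
Proof. by elim: s p => //= i s IHs p; rewrite !IHs maxnn. Qed.

Lemma valid_parity_tree s p : (forall a, is_projector (P a)) ->
  valid (parity_tree s p).
Proof. by move=> Pproj; elim: s p => //= i s IHs p. Qed.

End ParityTree.

Section PhaseMeasurement.
Variables (C : numClosedFieldType) (k : nat).
Hypothesis k_gt0 : (0 < k)%N.

Definition phase (a : 'I_k) : C := k.-root (-1) ^+ a.

Lemma norm_phase a : `|phase a| = 1.
Proof.
have root_norm : `|k.-root (-1 : C)| = 1.
  by apply/eqP; rewrite -(pexpr_eq1 k_gt0) // -normrX rootCK // normrN normr1.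
by rewrite /phase normrX root_norm expr1n.
Qed.

Lemma prod_phase n (x : 'I_n -> 'I_k) : (k %| \sum_i x i)%N ->
  \prod_i phase (x i) = (-1) ^+ ((\sum_i x i) %/ k).
Proof.
move=> /divnK sumx; rewrite /phase prodrXr -[in LHS]sumx mulnC exprM.
by rewrite rootCK.
Qed.

Definition phase_proj (a : 'I_k) : 'M[C]_2 :=
  rank1_proj (fun b : 'I_2 => phase a ^+ b).

Lemma sum_norm_phase_vec a : \sum_(c < 2) `|phase a ^+ c| ^+ 2 = 2.
Proof.
under eq_bigr => c _ do rewrite normrX norm_phase !expr1n.
by rewrite sumr_const card_ord.
Qed.

Lemma phase_projE a r c :
  phase_proj a r c = phase a ^+ r * (phase a ^+ c)^* / 2.
Proof. by rewrite mxE sum_norm_phase_vec. Qed.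

Lemma phase_proj_projector a : is_projector (phase_proj a).
Proof.
by apply: rank1_proj_projector; rewrite sum_norm_phase_vec pnatr_eq0.
Qed.

Definition outcome_proj (a : 'I_k) (c : bool) : 'M[C]_2 :=
  if c then phase_proj a else 1%:M - phase_proj a.

Lemma outcome_proj_col a c r :
  outcome_proj a c r ord0
  = (-1) ^+ (~~ c) * phase a * outcome_proj a c r ord_max.
Proof.
have phase_conj : (phase a)^* = (phase a)^-1.
  by rewrite invC_norm norm_phase expr1n invr1 mul1r.
have phase_neq0 : phase a != 0 by rewrite -normr_eq0 norm_phase oner_eq0.
rewrite /outcome_proj; case: c; rewrite !(phase_projE, mxE) /=.
all: case: r => [[|[|//]] r_lt] /=; rewrite !expr0 !expr1 ?rmorph1 ?phase_conj.
all: by field.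
Qed.

End PhaseMeasurement.

Section ParityProtocol.
Variables (C : numClosedFieldType) (n k : nat) (x : {ffun 'I_n -> 'I_k}).
Hypotheses (k_gt0 : (0 < k)%N) (xD : inD x).

Definition outcome_ops (b : 'I_n -> bool) (i : 'I_n) : 'M[C]_2 :=
  outcome_proj C (x i) (b i).

Definition count_false (s : seq 'I_n) (b : 'I_n -> bool) : nat :=
  \sum_(i < n | i \notin s) ~~ b i.

Lemma count_false_cons i s b : i \notin s ->
  count_false s b = (count_false (i :: s) b + ~~ b i)%N.
Proof.
move=> i_s; rewrite /count_false (bigD1 i) //= addnC; congr (_ + _)%N.
by apply: eq_bigl => l; rewrite in_cons negb_or andbC.
Qed.

Lemma Fval_odd : Fval x = odd ((\sum_i x i) %/ k).
Proof.
move: xD => /divnK sumx; rewrite /Fval -[in LHS]sumx -muln_modl mulnK // modn2.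
by case: odd.
Qed.

Lemma measured_ghz_eq0 b y : odd (count_false [::] b) != Fval x ->
  ghz_partial [::] (outcome_ops b) y = 0.
Proof.
move=> wrong_parity.
rewrite (ghz_measured_qubits (u := fun i => (-1) ^+ (~~ b i) * phase C (x i))).
  2: by move=> i r; rewrite outcome_proj_col.
rewrite big_split /= prod_phase // prodrXr -exprD -signr_odd oddD -Fval_odd.
have -> : odd (\sum_i ~~ b i) (+) Fval x.
  by move: wrong_parity; case: odd; case: Fval.
by rewrite expr1 addNr mul0r.
Qed.

Lemma parity_tree_correct s b : uniq s ->
  correct (parity_tree (@phase_proj C k) s (odd (count_false s b)))
          (ghz_partial s (outcome_ops b)) x (Fval x).
Proof.
elim: s b => [|i s IHs] b /=.
  by move=> _ [y]; apply: contraNeq => /(measured_ghz_eq0 y) ->.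
move=> /andP[i_s uniq_s]; set p := odd (count_false (i :: s) b).
have branch c :
    correct (parity_tree (@phase_proj C k) s (if c then p else ~~ p))
      (apply_local i (outcome_proj C (x i) c)
         (ghz_partial (i :: s) (outcome_ops b))) x (Fval x).
  pose b' l := if l == i then c else b l.
  have b'E l : l \notin i :: s -> b' l = b l.
    by rewrite in_cons negb_or => /andP[/negbTE l_i _]; rewrite /b' l_i.
  have -> : ghz_partial (i :: s) (outcome_ops b)
            = ghz_partial (i :: s) (outcome_ops b').
    by apply: ghz_partial_eq => l /b'E; rewrite /outcome_ops => ->.
  have -> : outcome_proj C (x i) c = outcome_ops b' i.
    by rewrite /outcome_ops /b' eqxx.
  rewrite apply_local_ghz_partial //.
  have -> : (if c then p else ~~ p) = odd (count_false s b').
    have count_b' : count_false (i :: s) b' = count_false (i :: s) b.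
      by apply: eq_bigr => l /b'E ->.
    rewrite (count_false_cons _ i_s) count_b' oddD /b' eqxx.
    by rewrite /p; case: (c); rewrite ?addbT ?addbF.
  exact: IHs.
by split; [exact: (branch false) | exact: (branch true)].
Qed.

End ParityProtocol.

Theorem lemma1 (R : realType) :
  exists c : nat, forall n k : nat, (0 < n)%N -> (0 < k)%N ->
    exists (d : nat) (psi : state R[i] n d) (t : proto R[i] n k d),
      (exists y, psi y != 0) /\ valid t /\ (depth t <= c * n)%N /\
      forall x : {ffun 'I_n -> 'I_k}, inD x -> correct t psi x (Fval x).
Proof.
exists 1%N => n k n_gt0 k_gt0.
exists 2%N, (@ghz R[i] n 2).
exists (parity_tree (@phase_proj R[i] k) (enum 'I_n) false).
split; first by exists [ffun => ord0]; rewrite ghz_const ?oner_neq0.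
split; first exact/valid_parity_tree/phase_proj_projector.
split; first by rewrite depth_parity_tree size_enum_ord mul1n.
move=> x xD; have no_false : count_false (enum 'I_n) (fun=> true) = 0%N.
  by rewrite /count_false big1.
have := parity_tree_correct R[i] k_gt0 xD (fun=> true) (enum_uniq 'I_n).
by rewrite no_false ghz_partial_enum.
Qed.
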